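(* If for some $u$ and some $i\in\{1,2,3\}$ the cusp $P_i'$ lies on $\mathcal{E}$, then $P_i'=P_i$, and this point is one of the four points $\frac{1}{\sqrt{a^2+b^2}}\left(\pm a^2,\pm b^2\right)$.
   Context: Let $a>b>0$ and $c>0$ with $c^2=a^2-b^2$. Let $\mathcal{E}$ be the ellipse $x^2/a^2+y^2/b^2=1$, parametrized by $P(t)=(a\cos t,b\sin t)$. For $u\in\mathbb{R}$ let $M=(a\cos u,b\sin u)$ and $\Delta_u(t)=(x_u(t),y_u(t))$, where $x_u(t)=\frac1a\big(c^2(1+\cos(t+u))\cos t-a^2\cos u\big)$ and $y_u(t)=\frac1b\big(c^2\cos t\sin(t+u)-c^2\sin t-a^2\sin u\big)$ (the negative pedal curve of $\mathcal{E}$ with respect to $M$). For $i=1,2,3$ let $t_i=-u/3-2\pi(i-1)/3$, $P_i=P(t_i)$, and $P_i'=\Delta_u(t_i)$ (the cusps). *)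

From Stdlib Require Import Reals.
Open Scope R_scope.

Definition ellP (a b t : R) : R * R := (a * cos t, b * sin t).

Definition on_ellipse (a b : R) (p : R * R) : Prop :=
  (fst p) ^ 2 / a ^ 2 + (snd p) ^ 2 / b ^ 2 = 1.

Definition negpedal (a b c u t : R) : R * R :=
  ( / a * (c ^ 2 * (1 + cos (t + u)) * cos t - a ^ 2 * cos u),
    / b * (c ^ 2 * cos t * sin (t + u) - c ^ 2 * sin t - a ^ 2 * sin u) ).

Definition tcusp (u : R) (i : nat) : R :=
  - u / 3 - 2 * PI * INR (i - 1) / 3.

From Stdlib Require Import Reals Lra Psatz.
Open Scope R_scope.

(* Write t for the cusp parameter t_i, C = cos t, S = sin t and
   k = a^2 + b^2.  Since 3t + u is a multiple of 2 pi, the angles u and t + u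
   reduce to -3t and -2t, so by the double- and triple-angle formulas the cusp
   takes the polynomial form
       P_i' = (C (3a^2 - 2kC^2) / a, S (3b^2 - 2kS^2) / b).
   Substituting it into the ellipse equation and using C^2 + S^2 = 1, the
   defect of the equation factors as 4 (b^2 - a^2) (kC^2 - a^2)^3; as a <> b,
   the cusp lies on the ellipse iff kC^2 = a^2, and then also kS^2 = b^2.
   These two relations give 3a^2 - 2kC^2 = a^2 and 3b^2 - 2kS^2 = b^2, i.e.
   P_i' = (a C, b S) = P_i, and (a C, b S) = (+-a^2, +-b^2) / sqrt k. *)

Lemma cos_3a (t : R) : cos (3 * t) = 4 * cos t ^ 3 - 3 * cos t.
Proof.
  replace (3 * t) with (2 * t + t) by ring.
  rewrite cos_plus, cos_2a_cos, sin_2a.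
  pose proof (sin2_cos2 t) as Hp; unfold Rsqr in Hp.
  replace (2 * sin t * cos t * sin t) with (2 * cos t * (1 - cos t * cos t))
    by (rewrite <- Hp; ring).
  ring.
Qed.

Lemma sin_3a (t : R) : sin (3 * t) = 3 * sin t - 4 * sin t ^ 3.
Proof.
  replace (3 * t) with (2 * t + t) by ring.
  rewrite sin_plus, cos_2a_sin, sin_2a.
  pose proof (sin2_cos2 t) as Hp; unfold Rsqr in Hp.
  replace (2 * sin t * cos t * cos t) with (2 * sin t * (1 - sin t * sin t))
    by (rewrite <- Hp; ring).
  ring.
Qed.

Lemma tcusp_spec (u : R) (i : nat) :
  3 * tcusp u i + u + 2 * INR (i - 1) * PI = 0.
Proof. unfold tcusp; field. Qed.

Lemma cusp_angles (u t : R) (m : nat) :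
  3 * t + u + 2 * INR m * PI = 0 ->
  cos u = cos (3 * t) /\ sin u = - sin (3 * t) /\
  cos (t + u) = cos (2 * t) /\ sin (t + u) = - sin (2 * t).
Proof.
  intro Ht.
  replace (3 * t) with (- (u + 2 * INR m * PI)) by lra.
  replace (2 * t) with (- ((t + u) + 2 * INR m * PI)) by lra.
  rewrite !cos_neg, !sin_neg, !cos_period, !sin_period.
  repeat split; ring.
Qed.

Lemma negpedal_cusp (a b c u t : R) (m : nat) :
  a <> 0 -> b <> 0 -> c ^ 2 = a ^ 2 - b ^ 2 ->
  3 * t + u + 2 * INR m * PI = 0 ->
  let k := a ^ 2 + b ^ 2 in
  negpedal a b c u t =
    (cos t * (3 * a ^ 2 - 2 * k * cos t ^ 2) / a,
     sin t * (3 * b ^ 2 - 2 * k * sin t ^ 2) / b).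
Proof.
  intros ha hb hc Ht k.
  destruct (cusp_angles u t m Ht) as [Hcu [Hsu [Hctu Hstu]]].
  pose proof (sin2_cos2 t) as Hp; unfold Rsqr in Hp.
  unfold negpedal, k.
  rewrite Hcu, Hsu, Hctu, Hstu, cos_3a, sin_3a, cos_2a_cos, sin_2a, hc.
  f_equal.
  - field; exact ha.
  - replace ((a ^ 2 - b ^ 2) * cos t * - (2 * sin t * cos t))
      with (- 2 * (a ^ 2 - b ^ 2) * sin t * (1 - sin t * sin t))
      by (rewrite <- Hp; ring).
    field; exact hb.
Qed.

Lemma cusp_ellipse_defect (a b C S : R) :
  C ^ 2 + S ^ 2 = 1 ->
  let k := a ^ 2 + b ^ 2 in
  (C * (3 * a ^ 2 - 2 * k * C ^ 2)) ^ 2 * b ^ 4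
    + (S * (3 * b ^ 2 - 2 * k * S ^ 2)) ^ 2 * a ^ 4 - a ^ 4 * b ^ 4
  = 4 * (b ^ 2 - a ^ 2) * (k * C ^ 2 - a ^ 2) ^ 3.
Proof.
  intros Hp k.
  replace ((S * (3 * b ^ 2 - 2 * k * S ^ 2)) ^ 2)
    with (S ^ 2 * (3 * b ^ 2 - 2 * k * S ^ 2) ^ 2) by ring.
  replace (S ^ 2) with (1 - C ^ 2) by lra.
  unfold k; ring.
Qed.

Lemma cusp_on_ellipse_cos2 (a b C S : R) :
  a > b -> b > 0 -> C ^ 2 + S ^ 2 = 1 ->
  let k := a ^ 2 + b ^ 2 in
  on_ellipse a b (C * (3 * a ^ 2 - 2 * k * C ^ 2) / a,
                  S * (3 * b ^ 2 - 2 * k * S ^ 2) / b) ->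
  k * C ^ 2 = a ^ 2.
Proof.
  intros hab hb Hp k hE; unfold on_ellipse in hE; cbn [fst snd] in hE.
  assert (Hpol : (C * (3 * a ^ 2 - 2 * k * C ^ 2)) ^ 2 * b ^ 4
                 + (S * (3 * b ^ 2 - 2 * k * S ^ 2)) ^ 2 * a ^ 4 = a ^ 4 * b ^ 4).
  { rewrite <- (Rmult_1_r (a ^ 4 * b ^ 4)), <- hE.
    field; split; lra. }
  pose proof (cusp_ellipse_defect a b C S Hp) as Hdef; fold k in Hdef.
  assert (Hcube : (k * C ^ 2 - a ^ 2) ^ 3 = 0).
  { apply (Rmult_eq_reg_l (4 * (b ^ 2 - a ^ 2))); nra. }
  destruct (Req_dec (k * C ^ 2 - a ^ 2) 0) as [H0 | H0]; [lra |].
  exfalso; exact (pow_nonzero _ 3 H0 Hcube).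
Qed.

Lemma signed_root (k p x : R) :
  k > 0 -> p > 0 -> k * x ^ 2 = p ^ 2 ->
  exists s : R, (s = 1 \/ s = -1) /\ p * x = s * p ^ 2 / sqrt k.
Proof.
  intros hk hp Hx.
  pose proof (sqrt_lt_R0 k hk) as Hsq.
  pose proof (sqrt_sqrt k (Rlt_le _ _ hk)) as Hsq2.
  exists (x * sqrt k / p); split.
  - assert (Hs2 : (x * sqrt k / p) ^ 2 = 1).
    { replace ((x * sqrt k / p) ^ 2) with (sqrt k * sqrt k * x ^ 2 / p ^ 2)
        by (field; lra).
      rewrite Hsq2, Hx; field; lra. }
    assert (Hfac : (x * sqrt k / p - 1) * (x * sqrt k / p + 1) = 0) by nra.
    destruct (Rmult_integral _ _ Hfac); lra.
  - field; lra.
Qed.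

Theorem proposition6p4 (a b c u : R) (i : nat) :
  a > b -> b > 0 -> c > 0 -> c ^ 2 = a ^ 2 - b ^ 2 ->
  (1 <= i <= 3)%nat ->
  on_ellipse a b (negpedal a b c u (tcusp u i)) ->
  negpedal a b c u (tcusp u i) = ellP a b (tcusp u i) /\
  exists s1 s2 : R, (s1 = 1 \/ s1 = -1) /\ (s2 = 1 \/ s2 = -1) /\
    ellP a b (tcusp u i) =
      (s1 * a ^ 2 / sqrt (a ^ 2 + b ^ 2), s2 * b ^ 2 / sqrt (a ^ 2 + b ^ 2)).
Proof.
  intros hab hb _ hc _ hE.
  set (t := tcusp u i) in *.
  assert (Hk : a ^ 2 + b ^ 2 > 0) by nra.
  assert (Hp : cos t ^ 2 + sin t ^ 2 = 1)
    by (pose proof (sin2_cos2 t); unfold Rsqr in *; lra).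
  rewrite (negpedal_cusp a b c u t (i - 1)) in hE |- *;
    try apply tcusp_spec; try lra.
  pose proof (cusp_on_ellipse_cos2 a b (cos t) (sin t) hab hb Hp hE) as HC.
  assert (HS : (a ^ 2 + b ^ 2) * sin t ^ 2 = b ^ 2) by nra.
  unfold ellP; split.
  - f_equal.
    + replace (3 * a ^ 2 - 2 * (a ^ 2 + b ^ 2) * cos t ^ 2) with (a ^ 2) by lra.
      field; lra.
    + replace (3 * b ^ 2 - 2 * (a ^ 2 + b ^ 2) * sin t ^ 2) with (b ^ 2) by lra.
      field; lra.
  - destruct (signed_root _ a (cos t) Hk ltac:(lra) HC) as [s1 [Hs1 Hx]].
    destruct (signed_root _ b (sin t) Hk hb HS) as [s2 [Hs2 Hy]].
    exists s1, s2; rewrite Hx, Hy; auto.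
Qed.
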